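(* Quantitative variability may fail for multifold edges under monotonic semantics: there exist a gradual semantics $\sigma$ satisfying monotonicity on all acyclic QBAFs, an acyclic QBAF $\mathcal{Q}=\langle\mathcal{A},\mathcal{R}^-,\mathcal{R}^+,\tau\rangle$, an argument $\alpha\in\mathcal{A}$, and an edge $r=(\beta,\gamma)\in\mathcal{R}$ multifold w.r.t. $\alpha$ with $\alpha\neq\beta$ and $\mathcal{R}(\beta)=\{r\}$, and some $\delta\in[0,1]$, such that either $\delta<\tau(\beta)$ and $|\phi_\delta|>|\phi^\alpha_\sigma(r)|$, or $\delta>\tau(\beta)$ and $|\phi_\delta|<|\phi^\alpha_\sigma(r)|$; here $\phi_\delta$ denotes $\phi^\alpha_\sigma(r)$ computed in $\langle\mathcal{A},\mathcal{R}^-,\mathcal{R}^+,\tau_\delta\rangle$ with $\tau_\delta(\beta)=\delta$ and $\tau_\delta=\tau$ on $\mathcal{A}\setminus\{\beta\}$.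
   Context: A QBAF is a quadruple $\mathcal{Q}=\langle\mathcal{A},\mathcal{R}^-,\mathcal{R}^+,\tau\rangle$ with $\mathcal{A}$ a finite set of arguments, $\mathcal{R}^-,\mathcal{R}^+\subseteq\mathcal{A}\times\mathcal{A}$ disjoint attack and support relations, and $\tau:\mathcal{A}\to[0,1]$ base scores; $\mathcal{R}=\mathcal{R}^-\cup\mathcal{R}^+$, $\mathcal{R}(\beta)=\{(\beta,\gamma)\in\mathcal{R}\}$; acyclic means $(\mathcal{A},\mathcal{R})$ has no directed cycle. A gradual semantics $\sigma$ assigns strengths in $[0,1]$ to arguments of QBAFs. For $\mathcal{S}\subseteq\mathcal{R}$, $\sigma_{\mathcal{S}}(\alpha)$ is the strength of $\alpha$ in $\langle\mathcal{A},\mathcal{R}^-\cap\mathcal{S},\mathcal{R}^+\cap\mathcal{S},\tau\rangle$; for $\tau':\mathcal{A}\to[0,1]$, $\sigma_{\tau'}(\alpha)$ is the strength of $\alpha$ in $\langle\mathcal{A},\mathcal{R}^-,\mathcal{R}^+,\tau'\rangle$. The RAE is $\phi^\alpha_\sigma(r)=\sum_{\mathcal{S}\subseteq\mathcal{R}\setminus\{r\}}\frac{(|\mathcal{R}|-|\mathcal{S}|-1)!|\mathcal{S}|!}{|\mathcal{R}|!}[\sigma_{\mathcal{S}\cup\{r\}}(\alpha)-\sigma_{\mathcal{S}}(\alpha)]$. $\sigma$ satisfies monotonicity on a class of QBAFs if for every QBAF in the class, every $\alpha,\beta\in\mathcal{A}$ with $\alpha\neq\beta$ and $\mathcal{R}(\beta)=\{(\beta,\alpha)\}$,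 and every $\tau':\mathcal{A}\to[0,1]$: (1) if $(\beta,\alpha)\in\mathcal{R}^-$ then $\sigma(\alpha)\le\sigma_{\mathcal{R}\setminus\{(\beta,\alpha)\}}(\alpha)$; (2) if $(\beta,\alpha)\in\mathcal{R}^+$ then $\sigma(\alpha)\ge\sigma_{\mathcal{R}\setminus\{(\beta,\alpha)\}}(\alpha)$; (3) if $(\beta,\alpha)\in\mathcal{R}^-$, $\tau(\beta)\le\tau'(\beta)$ and $\tau'=\tau$ on $\mathcal{A}\setminus\{\beta\}$, then $\sigma(\alpha)\ge\sigma_{\tau'}(\alpha)$; (4) if $(\beta,\alpha)\in\mathcal{R}^+$, $\tau(\beta)\le\tau'(\beta)$ and $\tau'=\tau$ on $\mathcal{A}\setminus\{\beta\}$, then $\sigma(\alpha)\le\sigma_{\tau'}(\alpha)$. A path from $\gamma$ to $\alpha$ is a finite sequence of edges $(x_0,x_1),\dots,(x_{k-1},x_k)\in\mathcal{R}$ with $x_0=\gamma$, $x_k=\alpha$. An edge $(\beta,\gamma)\in\mathcal{R}$ with $\beta\neq\alpha$ is multifold w.r.t. $\alpha$ if $\gamma\neq\alpha$ and there is more than one path from $\gamma$ to $\alpha$ in $\mathcal{Q}$. *)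

From HB Require Import structures.
From mathcomp Require Import all_boot all_order all_algebra.
From mathcomp Require Import reals.
Set Implicit Arguments. Unset Strict Implicit. Unset Printing Implicit Defensive.
Import Order.TTheory GRing.Theory Num.Theory.
Local Open Scope ring_scope.

Record qbaf (R : Type) (T : finType) := QBAF {
  att : rel T;
  sup : rel T;
  bs  : T -> R
}.

Section QBAF.
Variable R : realType.
Variable T : finType.
Implicit Types (Q : qbaf R T).

Definition valid_qbaf Q : Prop :=
  (forall x y, ~~ (att Q x y && sup Q x y)) /\
  (forall x, 0 <= bs Q x <= 1).

Definition edge Q : rel T := fun x y => att Q x y || sup Q x y.
Definition edges Q : {set T * T} := [set e | edge Q e.1 e.2].

Definition acyclic Q : Prop := forall x y, edge Q x y -> ~~ connect (edge Q) y x.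

Definition only_edge Q (b a : T) : Prop := forall c, edge Q b c <-> c = a.

Definition restrict Q (S : {set T * T}) : qbaf R T :=
  QBAF (fun x y => att Q x y && ((x, y) \in S))
       (fun x y => sup Q x y && ((x, y) \in S)) (bs Q).

Definition with_bs Q (t : T -> R) : qbaf R T := QBAF (att Q) (sup Q) t.

Definition update_bs Q (b : T) (d : R) : qbaf R T :=
  with_bs Q (fun x => if x == b then d else bs Q x).

(* a path from g to a: vertex sequence g = x0, x1, ..., xk = a with each
   (x_i, x_{i+1}) in R (for g <> a such paths are nonempty and correspond
   bijectively to edge sequences) *)
Definition is_path_to Q (g a : T) (p : seq T) : bool :=
  path (edge Q) g p && (last g p == a).

Definition multifold Q (a : T) (r : T * T) : Prop :=
  edge Q r.1 r.2 /\ r.1 != a /\ r.2 != a /\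
  exists p1 p2, [/\ is_path_to Q r.2 a p1, is_path_to Q r.2 a p2 & p1 != p2].

End QBAF.

Definition semantics (R : realType) :=
  forall T : finType, qbaf R T -> T -> R.

Definition gradual (R : realType) (sigma : semantics R) : Prop :=
  forall (T : finType) (Q : qbaf R T), valid_qbaf Q ->
    forall x, 0 <= sigma T Q x <= 1.

Definition monotonic_acyclic (R : realType) (sigma : semantics R) : Prop :=
  forall (T : finType) (Q : qbaf R T), valid_qbaf Q -> acyclic Q ->
  forall (a b : T), a != b -> only_edge Q b a ->
  forall tau' : T -> R, (forall x, 0 <= tau' x <= 1) ->
  [/\ (att Q b a -> sigma T Q a <= sigma T (restrict Q (edges Q :\ (b, a))) a),
      (sup Q b a -> sigma T Q a >= sigma T (restrict Q (edges Q :\ (b, a))) a),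
      (att Q b a -> bs Q b <= tau' b -> (forall x, x != b -> tau' x = bs Q x) ->
          sigma T Q a >= sigma T (with_bs Q tau') a) &
      (sup Q b a -> bs Q b <= tau' b -> (forall x, x != b -> tau' x = bs Q x) ->
          sigma T Q a <= sigma T (with_bs Q tau') a)].

Definition RAE (R : realType) (sigma : semantics R) (T : finType)
    (Q : qbaf R T) (a : T) (r : T * T) : R :=
  let n := #|edges Q| in
  \sum_(S : {set T * T} | S \subset (edges Q :\ r))
     ((((n - #|S| - 1)`! * #|S|`!)%:R / (n`!)%:R) *
      (sigma T (restrict Q (r |: S)) a - sigma T (restrict Q S) a)).

(* The witness semantics gives an argument strength 1 exactly when it is
   reached by a two-step chain y -> z -> x in which y has base score 0 and z
   has at least two out-edges, and strength 0 otherwise.  An argument b whose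
   only out-edge goes to a can play neither role in a chain ending at a (it
   does not branch, and as the first link it would force the loop a -> a), so
   neither deleting (b, a) nor changing the base score of b affects a: the
   monotonicity conditions hold with equality.  In the QBAF with supports
   beta -> gamma, gamma -> alpha, gamma -> eta, eta -> alpha and all base
   scores 1, the edge (beta, gamma) is multifold w.r.t. alpha and its RAE is 0;
   lowering the base score of beta to 0 makes the RAE positive. *)
From HB Require Import structures.
From mathcomp Require Import all_boot all_order all_algebra.
From mathcomp Require Import reals.

Set Implicit Arguments.
Unset Strict Implicit.
Import Order.TTheory GRing.Theory Num.Theory.
Local Open Scope ring_scope.

Section QBAFFacts.
Variables (R : realType) (T : finType).
Implicit Types (Q : qbaf R T) (S : {set T * T}).

Lemma edge_restrict Q S x y :
  edge (restrict Q S) x y = edge Q x y && ((x, y) \in S).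
Proof. by rewrite /edge /= andb_orl. Qed.

Lemma acyclic_irrefl Q x : acyclic Q -> ~~ edge Q x x.
Proof. by move=> acQ; apply/negP => exx; have := acQ x x exx; rewrite connect0. Qed.

Lemma acyclic_of_rank Q (rank : T -> nat) :
  (forall x y, edge Q x y -> rank y < rank x)%N -> acyclic Q.
Proof.
move=> rank_edge x y exy; apply/negP => /connectP [p pth xE].
suff : (rank (last y p) <= rank y)%N by rewrite -xE leqNgt (rank_edge _ _ exy).
elim: p y {exy xE} pth => [|z p IHp] y //= /andP [eyz pth].
exact: leq_trans (IHp z pth) (ltnW (rank_edge _ _ eyz)).
Qed.

End QBAFFacts.

Section RAESign.
Variables (R : realType) (sigma : semantics R) (T : finType).
Variables (Q : qbaf R T) (a : T) (r : T * T).
Implicit Types (S : {set T * T}).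

Let shapley_weight_gt0 (k m n : nat) : 0 < ((k`! * m`!)%:R / (n`!)%:R :> R).
Proof. by apply: divr_gt0; rewrite ltr0n ?muln_gt0 !fact_gt0. Qed.

Lemma RAE_eq0 :
  (forall S, S \subset edges Q :\ r ->
     sigma (restrict Q (r |: S)) a = sigma (restrict Q S) a) ->
  RAE sigma Q a r = 0.
Proof. by move=> sigma_eq; rewrite /RAE big1 // => S /sigma_eq ->; rewrite subrr mulr0. Qed.

Lemma RAE_gt0 S0 :
  (forall S, S \subset edges Q :\ r ->
     sigma (restrict Q S) a <= sigma (restrict Q (r |: S)) a) ->
  S0 \subset edges Q :\ r ->
  sigma (restrict Q S0) a < sigma (restrict Q (r |: S0)) a ->
  0 < RAE sigma Q a r.
Proof.
move=> sigma_le S0r sigma_lt; rewrite /RAE (bigD1 S0) //=.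
apply: ltr_pwDl; first by apply: mulr_gt0; rewrite ?subr_gt0.
apply: sumr_ge0 => S /andP [Sr _]; apply: mulr_ge0; first exact/ltW.
by rewrite subr_ge0 sigma_le.
Qed.

End RAESign.

Section ChainSemantics.
Variable R : realType.

Definition branching (T : finType) (Q : qbaf R T) (z : T) : bool :=
  [exists w1, exists w2, [&& w1 != w2, edge Q z w1 & edge Q z w2]].

Definition zero_fed_branch (T : finType) (Q : qbaf R T) (x : T) : bool :=
  [exists y, exists z, [&& edge Q y z, edge Q z x, bs Q y == 0 & branching Q z]].

Definition chain_sem : semantics R :=
  fun T Q x => if zero_fed_branch Q x then 1 else 0.

Variable T : finType.
Implicit Types (Q : qbaf R T) (S : {set T * T}).

Lemma chain_sem_ge0 Q x : 0 <= chain_sem Q x.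
Proof. by rewrite /chain_sem; case: ifP. Qed.

Lemma chain_sem_eq0 Q x :
  (forall y z, edge Q y z -> bs Q y != 0) -> chain_sem Q x = 0.
Proof.
move=> bs_src; rewrite /chain_sem; case: ifP => //.
by move=> /existsP [y /existsP [z /and4P [eyz _ /eqP bs0 _]]]; case/eqP: (bs_src _ _ eyz).
Qed.

Lemma chain_sem_eq1 Q x y z :
  edge Q y z -> edge Q z x -> bs Q y = 0 -> branching Q z -> chain_sem Q x = 1.
Proof.
move=> eyz ezx /eqP bs0 bz; rewrite /chain_sem ifT //.
by apply/existsP; exists y; apply/existsP; exists z; rewrite eyz ezx bs0.
Qed.

Lemma only_edge_branchingF Q b a : only_edge Q b a -> branching Q b = false.
Proof.
move=> onlyb; apply/negbTE/negP => /existsP [w1 /existsP [w2]].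
by case/and3P=> nw /(onlyb _).1 e1 /(onlyb _).1 e2; rewrite e1 e2 eqxx in nw.
Qed.

Lemma branching_restrict Q S z : branching (restrict Q S) z -> branching Q z.
Proof.
move=> /existsP [w1 /existsP [w2]].
rewrite !edge_restrict => /and3P [nw /andP [e1 _] /andP [e2 _]].
by apply/existsP; exists w1; apply/existsP; exists w2; rewrite nw e1 e2.
Qed.

Lemma chain_sem_delete_only_edge Q a b : acyclic Q -> only_edge Q b a ->
  chain_sem (restrict Q (edges Q :\ (b, a))) a = chain_sem Q a.
Proof.
move=> acQ onlyb; rewrite /chain_sem /zero_fed_branch; congr (if _ then _ else _).
apply/eq_existsb => y; apply/eq_existsb => z.
have [->|nzb] := eqVneq z b.
  have /negbTE-> : ~~ branching (restrict Q (edges Q :\ (b, a))) b.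
    by apply/negP => /branching_restrict; rewrite (only_edge_branchingF onlyb).
  by rewrite (only_edge_branchingF onlyb) !andbF.
have restrict_from_z w : edge (restrict Q (edges Q :\ (b, a))) z w = edge Q z w.
  by rewrite edge_restrict !inE xpair_eqE (negbTE nzb); case: edge.
have -> : branching (restrict Q (edges Q :\ (b, a))) z = branching Q z.
  by apply/eq_existsb => w1; apply/eq_existsb => w2; rewrite !restrict_from_z.
rewrite restrict_from_z edge_restrict !inE xpair_eqE.
have [->|nza] := eqVneq z a; first by rewrite (negbTE (acyclic_irrefl _ acQ)) !andbF.
by rewrite andbF /=; case: edge.
Qed.

Lemma chain_sem_with_bs_only_edge Q a b tau' : acyclic Q -> only_edge Q b a ->
  (forall x, x != b -> tau' x = bs Q x) -> chain_sem (with_bs Q tau') a = chain_sem Q a.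
Proof.
move=> acQ onlyb tau'E; rewrite /chain_sem /zero_fed_branch; congr (if _ then _ else _).
have edge_with_bs : edge (with_bs Q tau') = edge Q by [].
apply/eq_existsb => y; apply/eq_existsb => z; rewrite /branching edge_with_bs /=.
have [->|nyb] := eqVneq y b; last by rewrite tau'E.
case ebz: (edge Q b z) => //=.
by rewrite ((onlyb z).1 ebz) (negbTE (acyclic_irrefl _ acQ)).
Qed.

End ChainSemantics.

Arguments chain_sem R [T].

Lemma chain_sem_gradual (R : realType) : gradual (chain_sem R).
Proof. by move=> T Q _ x; rewrite /chain_sem; case: ifP; rewrite ?lexx ?ler01. Qed.

Lemma chain_sem_monotonic (R : realType) : monotonic_acyclic (chain_sem R).
Proof.
move=> T Q _ acQ a b _ onlyb tau' _.
rewrite (chain_sem_delete_only_edge acQ onlyb).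
by split=> // _ _ tau'E; rewrite (chain_sem_with_bs_only_edge acQ onlyb tau'E).
Qed.

Section Example.
Variable R : realType.

Definition alpha : 'I_4 := @Ordinal 4 0 isT.
Definition eta : 'I_4 := @Ordinal 4 1 isT.
Definition gamma : 'I_4 := @Ordinal 4 2 isT.
Definition beta : 'I_4 := @Ordinal 4 3 isT.

Definition diamond : qbaf R 'I_4 :=
  QBAF (fun _ _ => false)
       (fun x y => (val x, val y) \in [:: (3, 2); (2, 0); (2, 1); (1, 0)]%N)
       (fun _ => 1).

Lemma diamond_valid : valid_qbaf diamond.
Proof. by split=> [x y|x]; rewrite /= ?lexx ?ler01. Qed.

Lemma diamond_acyclic : acyclic diamond.
Proof.
by apply: (@acyclic_of_rank _ _ _ val) => -[[|[|[|[|?]]]] ?] [[|[|[|[|?]]]] ?].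
Qed.

Lemma diamond_only_edge : only_edge diamond beta gamma.
Proof. by move=> c; split=> [|->] //; move: c => [[|[|[|[|?]]]] ?] // _; apply/val_inj. Qed.

Lemma diamond_multifold : multifold diamond alpha (beta, gamma).
Proof. by do 3!split=> //; exists [:: alpha], [:: eta; alpha]. Qed.

Lemma RAE_diamond : RAE (chain_sem R) diamond alpha (beta, gamma) = 0.
Proof.
apply: RAE_eq0 => S _.
by rewrite !chain_sem_eq0 // => y z _; apply: oner_neq0.
Qed.

Lemma RAE_diamond_beta0 :
  0 < RAE (chain_sem R) (update_bs diamond beta 0) alpha (beta, gamma).
Proof.
set Q := update_bs diamond beta 0.
have strength0 (S : {set 'I_4 * 'I_4}) :
    S \subset edges Q :\ (beta, gamma) -> chain_sem R (restrict Q S) alpha = 0.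
  move=> Sr; apply: chain_sem_eq0 => y z; rewrite edge_restrict /= => /andP [eyz yzS].
  case: (y =P beta) => [yb|_]; last exact: oner_neq0.
  move: yzS eyz; rewrite yb => /(subsetP Sr); rewrite !inE xpair_eqE eqxx /=.
  by move=> /andP [/negbTE nzg _] /(diamond_only_edge z).1 zg; rewrite zg eqxx in nzg.
pose S0 : {set 'I_4 * 'I_4} := [set (gamma, alpha); (gamma, eta)].
have S0r : S0 \subset edges Q :\ (beta, gamma).
  by apply/subsetP => e; rewrite !inE => /orP [] /eqP ->.
apply: (RAE_gt0 _ S0r); first by move=> S Sr; rewrite strength0 ?chain_sem_ge0.
rewrite strength0 // (chain_sem_eq1 (y := beta) (z := gamma)) ?ltr01 ?edge_restrict ?inE //.
by apply/existsP; exists alpha; apply/existsP; exists eta; rewrite !edge_restrict !inE.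
Qed.

End Example.

Theorem proposition14 (R : realType) :
  exists sigma : semantics R,
    gradual sigma /\ monotonic_acyclic sigma /\
    exists (T : finType) (Q : qbaf R T),
      valid_qbaf Q /\ acyclic Q /\
      exists (a b g : T) (d : R),
        let r := (b, g) in
        [/\ multifold Q a r, a != b, only_edge Q b r.2,
            0 <= d <= 1 &
            (d < bs Q b /\
               `|RAE sigma (update_bs Q b d) a r| > `|RAE sigma Q a r|)
            \/
            (d > bs Q b /\
               `|RAE sigma (update_bs Q b d) a r| < `|RAE sigma Q a r|)].
Proof.
exists (chain_sem R); split; first exact: chain_sem_gradual.
split; first exact: chain_sem_monotonic.
exists 'I_4, (diamond R); split; first exact: diamond_valid.
split; first exact: diamond_acyclic.
exists alpha, beta, gamma, 0; split => //.
- exact: diamond_multifold.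
- exact: diamond_only_edge.
- by rewrite lexx ler01.
left; split; first exact: ltr01.
by rewrite RAE_diamond normr0 normr_gt0 gt_eqF // RAE_diamond_beta0.
Qed.
About chain_sem. About branching. About RAE_gt0. About edge_restrict.
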